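(* Let $k$ be a positive integer, $\hat s_k$ an integer, $m_{k-1}\in(0,1)$, and $\hat B_{k,\hat s_k}\in[0,2]$. For integers $\ell\ge\hat s_k$ define $$\hat B_{k,\ell}=\min\big\{2,\ m_{k-1}^{\ell-\hat s_k}(\ell-\hat s_k+1)\hat B_{k,\hat s_k}\big\}.$$ Then for every integer $s$ satisfying $m_{k-1}^{s-\hat s_k}\le\frac{1}{s-\hat s_k+1}$ and $s\ge\frac{km_{k-1}}{1-m_{k-1}}+\hat s_k$, and every integer $\ell\ge s$, $$\hat B_{k,\ell}\le\Big(\frac1k+\frac{k-1}{k}m_{k-1}\Big)^{\ell-s}\hat B_{k,s}.$$ *)

From Stdlib Require Import Reals ZArith.
Open Scope R_scope.

Definition Bhat (shat : Z) (m B0 : R) (l : Z) : R :=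
  Rmin 2 (m ^ Z.to_nat (l - shat) * (IZR (l - shat) + 1) * B0).

From Stdlib Require Import Reals ZArith Lra Lia Psatz.
Open Scope R_scope.

(* Write [b_j = m^j (j+1) B0] for the unclipped sequence, so that
   [Bhat l = min 2 b_(l - shat)].  Its ratio [b_(j+1) / b_j = m (j+2) / (j+1)]
   is at most [c = 1/k + (k-1)/k m] exactly when [k m <= (1-m)(j+1)], and the
   lower bound on [s] guarantees this for every [j >= s - shat].  Hence
   [b_(l - shat) <= c^(l-s) b_(s - shat)], while the bound on
   [m^(s - shat)] makes [b_(s - shat) <= 2], so the clipping at 2 is
   inactive at [s]. *)

Definition Bseq (m B0 : R) (j : nat) : R := m ^ j * (INR j + 1) * B0.

Lemma Bhat_shift (shat : Z) (m B0 : R) (j : nat) :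
  Bhat shat m B0 (shat + Z.of_nat j) = Rmin 2 (Bseq m B0 j).
Proof.
  unfold Bhat, Bseq.
  replace (shat + Z.of_nat j - shat)%Z with (Z.of_nat j) by lia.
  now rewrite Nat2Z.id, <- INR_IZR_INZ.
Qed.

Lemma Bseq_le_2 (m B0 : R) (j : nat) :
  0 <= B0 <= 2 -> m ^ j <= 1 / (INR j + 1) -> Bseq m B0 j <= 2.
Proof.
  intros HB0 Hmj. unfold Bseq.
  assert (Hj : 0 < INR j + 1) by (pose proof (pos_INR j); lra).
  assert (Hprod : m ^ j * (INR j + 1) <= 1).
  { replace 1 with (1 / (INR j + 1) * (INR j + 1)) at 2 by (field; lra).
    apply Rmult_le_compat_r; lra. }
  nra.
Qed.

Lemma Bseq_succ_le (m B0 c : R) (j : nat) :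
  0 <= m -> 0 <= B0 -> m * (INR j + 2) <= c * (INR j + 1) ->
  Bseq m B0 (S j) <= c * Bseq m B0 j.
Proof.
  intros Hm HB0 Hratio. unfold Bseq. rewrite S_INR. simpl pow.
  assert (0 <= m ^ j * B0) by (apply Rmult_le_pos; [apply pow_le|]; lra).
  nra.
Qed.

Lemma contraction_factor_nonneg (K m : R) :
  1 <= K -> 0 <= m -> 0 <= 1 / K + (K - 1) / K * m.
Proof.
  intros HK Hm. unfold Rdiv.
  assert (HinvK : 0 < / K) by (apply Rinv_0_lt_compat; lra).
  assert (0 <= (K - 1) * / K * m)
    by (apply Rmult_le_pos; [apply Rmult_le_pos|]; lra).
  lra.
Qed.

Lemma ratio_le_contraction_factor (K m x : R) :
  0 < K -> K * m <= (1 - m) * (x + 1) ->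
  m * (x + 2) <= (1 / K + (K - 1) / K * m) * (x + 1).
Proof.
  intros HK Hx. apply Rmult_le_reg_r with K; [exact HK|].
  replace ((1 / K + (K - 1) / K * m) * (x + 1) * K)
    with ((1 + (K - 1) * m) * (x + 1)) by (field; lra).
  nra.
Qed.

Lemma geometric_bound_from (u : nat -> R) (c : R) (n : nat) :
  0 <= c -> (forall j, (n <= j)%nat -> u (S j) <= c * u j) ->
  forall t, u (n + t)%nat <= c ^ t * u n.
Proof.
  intros Hc Hstep t. induction t as [|t IH].
  - rewrite Nat.add_0_r. simpl. lra.
  - rewrite Nat.add_succ_r. simpl pow.
    apply Rle_trans with (c * u (n + t)%nat); [apply Hstep; lia|].
    rewrite Rmult_assoc. apply Rmult_le_compat_l; assumption.
Qed.

Theorem lemma5 (k : nat) (shat : Z) (m B0 : R)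
  (hk : (0 < k)%nat)
  (hm : 0 < m < 1)
  (hB0 : 0 <= B0 <= 2) :
  forall s : Z,
    m ^ Z.to_nat (s - shat) <= 1 / (IZR (s - shat) + 1) ->
    IZR s >= INR k * m / (1 - m) + IZR shat ->
    forall l : Z, (s <= l)%Z ->
      Bhat shat m B0 l
        <= (1 / INR k + (INR k - 1) / INR k * m) ^ Z.to_nat (l - s)
           * Bhat shat m B0 s.
Proof.
  intros s Hdecay Hlarge l Hsl.
  assert (HK : 1 <= INR k) by (apply (le_INR 1); lia).
  assert (Hgap : INR k * m <= (1 - m) * (IZR s - IZR shat)).
  { replace (INR k * m) with ((1 - m) * (INR k * m / (1 - m))) by (field; lra).
    apply Rmult_le_compat_l; lra. }
  assert (Hsn : (0 <= s - shat)%Z).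
  { apply le_IZR. rewrite minus_IZR. nra. }
  destruct (Z_of_nat_complete _ Hsn) as [n Hn].
  destruct (Z_of_nat_complete (l - s) ltac:(lia)) as [t Ht].
  rewrite <- minus_IZR, Hn, <- INR_IZR_INZ in Hgap.
  rewrite Hn, Nat2Z.id, <- INR_IZR_INZ in Hdecay.
  rewrite Ht, Nat2Z.id.
  replace l with (shat + Z.of_nat (n + t))%Z by lia.
  replace s with (shat + Z.of_nat n)%Z by lia.
  rewrite !Bhat_shift, (Rmin_right _ _ (Bseq_le_2 m B0 n hB0 Hdecay)).
  apply Rle_trans with (1 := Rmin_r _ _).
  apply geometric_bound_from; [apply contraction_factor_nonneg; lra|].
  intros j Hj. apply Bseq_succ_le; [lra | lra |].
  apply ratio_le_contraction_factor; [lra|].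
  apply le_INR in Hj. nra.
Qed.
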